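(* Let $R$ be a commutative ring, $M$ a locally free $R$-module of rank 2, $N$ a locally free $R$-module of rank 1, and $q:M\to N$ a quadratic map (in the sense of Kneser) with corresponding element $f\in\mathrm{Sym}^2M^*\otimes N$. Then $q$ is primitive in the sense of Kneser if and only if the linear binary quadratic form $f$ is primitive.
   Context: A quadratic map $q:M\to N$ is a map of sets with $q(rm)=r^2q(m)$ for $r\in R$, $m\in M$, such that $B(x,y)=q(x+y)-q(x)-q(y)$ is $R$-bilinear. It is primitive (Kneser) if $q(M)$ generates $N$ as an $R$-module. The corresponding $f\in\mathrm{Sym}^2M^*\otimes N\cong\mathrm{Hom}_R(\mathrm{Sym}_2M,N)$ (where $\mathrm{Sym}_2M\subset M^{\otimes2}$ is the submodule of symmetric tensors) is the homomorphism determined, on each open where $M$ is free with basis $m_1,m_2$, by $m_i\otimes m_i\mapsto q(m_i)$ and $m_1\otimes m_2+m_2\otimes m_1\mapsto B(m_1,m_2)$; equivalently $q(m)$ is the value of $f$ on $m\otimes m$. A linear binary quadratic form $f\in\mathrm{Sym}^2V\otimes L$ ($V$ locally free of rank 2, $L$ locally free of rank 1) is primitive if on every open where $V$ has basis $x,y$ and $L$ has basis $z$, writing $f=ax^2z+bxyz+cy^2z$, the elements $a,b,c$ generate the unit ideal; here $V=M^*$, $L=N$. *)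

(* Locally free modules, localizations and primitivity are
   expressed by clearing denominators: everything about R_g, M_g, N_g is
   written as statements about elements of R, M, N and powers of g. *)
From HB Require Import structures.
From mathcomp Require Import all_boot all_order all_algebra.
Set Implicit Arguments. Unset Strict Implicit. Unset Printing Implicit Defensive.
Import GRing.Theory.
Local Open Scope ring_scope.

Section Defs.
Variable R : comPzRingType.

(* x = y in the localization V_g (V an R-module). *)
Definition eq_loc (V : lmodType R) (g : R) (x y : V) : Prop :=
  exists k : nat, g ^+ k *: (x - y) = 0.

(* The images e_0,...,e_{n-1} of elements of M form a basis of the
   R_g-module M_g (g : R), i.e. M is free with basis e on the open D(g). *)
Definition free_on (M : lmodType R) (g : R) (n : nat) (e : 'I_n -> M) : Prop :=
  (forall m : M, exists (k : nat) (r : 'I_n -> R),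
      g ^+ k *: m = \sum_(i < n) r i *: e i) /\
  (forall r : 'I_n -> R, \sum_(i < n) r i *: e i = 0 ->
      exists k : nat, forall i, g ^+ k * r i = 0).

Definition locally_free (M : lmodType R) (n : nat) : Prop :=
  exists (k : nat) (g c : 'I_k -> R) (e : 'I_k -> 'I_n -> M),
    \sum_(i < k) c i * g i = 1 /\ forall i, free_on (g i) (e i).

Definition polar (M N : lmodType R) (q : M -> N) (x y : M) : N :=
  q (x + y) - q x - q y.

Definition quadratic_map (M N : lmodType R) (q : M -> N) : Prop :=
  (forall (r : R) (m : M), q (r *: m) = r ^+ 2 *: q m) /\
  (forall x y z : M, polar q (x + y) z = polar q x z + polar q y z) /\
  (forall (r : R) (x y : M), polar q (r *: x) y = r *: polar q x y) /\
  (forall x y z : M, polar q x (y + z) = polar q x y + polar q x z) /\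
  (forall (r : R) (x y : M), polar q x (r *: y) = r *: polar q x y).

Definition kneser_primitive (M N : lmodType R) (q : M -> N) : Prop :=
  forall n : N, exists s : seq (R * M),
    n = \sum_(p <- s) p.1 *: q p.2.

(* On an open D(g) where M has basis e_0, e_1 (dual
   basis x, y of V = M^* ) and N has basis z, f = a x^2 z + b x y z + c y^2 z
   with a z = f(e0 (x) e0) = q e0, b z = f(e0 (x) e1 + e1 (x) e0) = B(e0,e1),
   c z = f(e1 (x) e1) = q e1 in N_g.  Writing the coefficients over the common
   denominator g^k (a/g^k, b/g^k, c/g^k in R_g), the condition "a, b, c
   generate the unit ideal of R_g" unfolds to: some power of g lies in the
   ideal of R generated by the numerators. *)
Definition form_primitive (M N : lmodType R) (q : M -> N) : Prop :=
  forall (g : R) (e : 'I_2 -> M) (z : 'I_1 -> N) (a b c : R) (k : nat),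
    free_on g e -> free_on g z ->
    eq_loc g (g ^+ k *: q (e ord0)) (a *: z ord0) ->
    eq_loc g (g ^+ k *: polar q (e ord0) (e ord_max)) (b *: z ord0) ->
    eq_loc g (g ^+ k *: q (e ord_max)) (c *: z ord0) ->
    exists (l : nat) (u v w : R), g ^+ l = u * a + v * b + w * c.

End Defs.

(* Both conditions say that the "values" of q generate N locally.  If q(M) spans N,
   then on an open D(g) where M = <e0, e1> and N = <z>, every q(r0 e0 + r1 e1) is
   (r0^2 a + r0 r1 b + r1^2 c) z, so z is an (a, b, c)-multiple of itself and some
   power of g lies in (a, b, c).  Conversely, if the coefficients generate the unit
   ideal on every such D(g), then the set of r with r^m n in span q(M) for some m is
   an ideal containing the products of the two trivializing covers of M and N,
   hence contains 1. *)
From HB Require Import structures.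
From mathcomp Require Import all_boot all_order all_algebra.
From mathcomp Require Import ring.
Set Implicit Arguments. Unset Strict Implicit. Unset Printing Implicit Defensive.
Local Open Scope ring_scope.
Import GRing.Theory.

Lemma big_ord2 (V : nmodType) (F : 'I_2 -> V) :
  \sum_(i < 2) F i = F ord0 + F ord_max.
Proof. by rewrite big_ord_recl big_ord1; congr (_ + F _); apply: val_inj. Qed.

Section FreeOn.
Variable R : comPzRingType.
Variable V : lmodType R.

Lemma eq_locP (g : R) (x y : V) : eq_loc g x y ->
  exists k, forall j, (k <= j)%N -> g ^+ j *: x = g ^+ j *: y.
Proof.
move=> [k Hk]; exists k => j le_kj.
rewrite -(subnK le_kj) exprD -!scalerA; congr (_ *: _).
by apply/eqP; rewrite -subr_eq0 -scalerBr Hk.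
Qed.

Lemma eq_loc_eq (g : R) (x y : V) : x = y -> eq_loc g x y.
Proof. by move=> ->; exists 0%N; rewrite subrr scaler0. Qed.

Lemma scale_expr_ge (g r : R) (v w : V) k j : g ^+ k *: v = r *: w ->
  (k <= j)%N -> g ^+ j *: v = (g ^+ (j - k) * r) *: w.
Proof. by move=> E le_kj; rewrite -(subnK le_kj) exprD -scalerA E scalerA addnK. Qed.

Lemma free_onMr n (g h : R) (e : 'I_n -> V) : free_on g e -> free_on (g * h) e.
Proof.
move=> [span indep]; split.
  move=> m; have [k [r Hr]] := span m; exists k, (fun i => h ^+ k * r i).
  rewrite exprMn mulrC -scalerA Hr scaler_sumr.
  by apply: eq_bigr => i _; rewrite scalerA.
move=> r /indep [k Hk]; exists k => i.
by rewrite exprMn mulrAC Hk mul0r.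
Qed.

Lemma free_on1_coord (g : R) (z : 'I_1 -> V) v : free_on g z ->
  exists k r, g ^+ k *: v = r *: z ord0.
Proof. by move=> [span _]; have [k [r]] := span v; rewrite big_ord1; exists k, (r ord0). Qed.

Lemma free_on1_scale_inj (g r s : R) (z : 'I_1 -> V) : free_on g z ->
  r *: z ord0 = s *: z ord0 -> exists k, g ^+ k * r = g ^+ k * s.
Proof.
move=> [_ indep] E; have [|k Hk] := indep (fun _ => r - s).
  by rewrite big_ord1 scalerBl E subrr.
by exists k; apply/eqP; rewrite -subr_eq0 -mulrBr (Hk ord0).
Qed.

End FreeOn.

Section QuadraticMap.
Variable R : comPzRingType.
Variables M N : lmodType R.
Variable q : M -> N.

Definition qspan (n : N) : Prop :=
  exists s : seq (R * M), n = \sum_(p <- s) p.1 *: q p.2.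

Lemma qspan0 : qspan 0.
Proof. by exists [::]; rewrite big_nil. Qed.

Lemma qspan_q m : qspan (q m).
Proof. by exists [:: (1, m)]; rewrite big_seq1 scale1r. Qed.

Lemma qspanD x y : qspan x -> qspan y -> qspan (x + y).
Proof. by move=> [s1 ->] [s2 ->]; exists (s1 ++ s2); rewrite big_cat. Qed.

Lemma qspanZ r x : qspan x -> qspan (r *: x).
Proof.
move=> [s ->]; exists [seq (r * p.1, p.2) | p <- s].
by rewrite big_map scaler_sumr; apply: eq_bigr => p _; rewrite scalerA.
Qed.

Lemma qspan_polar x y : qspan (polar q x y).
Proof.
by rewrite /polar -!scaleN1r; do 2?apply: qspanD; do ?apply: qspanZ; apply: qspan_q.
Qed.

Lemma qspan_ind (P : N -> Prop) :
  P 0 -> (forall x y, P x -> P y -> P (x + y)) -> (forall r x, P x -> P (r *: x)) ->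
  (forall m, P (q m)) -> forall n, qspan n -> P n.
Proof.
move=> P0 PD PZ Pq n [s ->]; elim: s => [|p s IH]; first by rewrite big_nil.
by rewrite big_cons; apply: PD => //; apply: PZ.
Qed.

Hypothesis hq : quadratic_map q.

Lemma quadratic_map_comb s t x y :
  q (s *: x + t *: y) = s ^+ 2 *: q x + t ^+ 2 *: q y + (s * t) *: polar q x y.
Proof.
have [qZ [_ [polarZl [_ polarZr]]]] := hq.
have -> : q (s *: x + t *: y) = q (s *: x) + q (t *: y) + polar q (s *: x) (t *: y).
  by rewrite /polar -[_ - q _ - q _]addrA -opprD addrC addNKr.
by rewrite polarZl polarZr scalerA !qZ.
Qed.

Lemma scale_quadratic_map_comb d a b c (w : N) x y r0 r1 :
  d *: q x = a *: w -> d *: polar q x y = b *: w -> d *: q y = c *: w ->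
  d *: q (r0 *: x + r1 *: y) = (r0 ^+ 2 * a + r0 * r1 * b + r1 ^+ 2 * c) *: w.
Proof.
move=> Ex Exy Ey; rewrite quadratic_map_comb 2!scalerDr !scalerA !(mulrC d).
by rewrite -!scalerA Ex Exy Ey !scalerA -!scalerDl; congr (_ *: _); ring.
Qed.

Definition ideal3 (a b c x : R) : Prop := exists u v w, x = u * a + v * b + w * c.

Lemma ideal3_0 a b c : ideal3 a b c 0.
Proof. by exists 0, 0, 0; ring. Qed.

Lemma ideal3D a b c x y : ideal3 a b c x -> ideal3 a b c y -> ideal3 a b c (x + y).
Proof.
move=> [u [v [w ->]]] [u' [v' [w' ->]]].
by exists (u + u'), (v + v'), (w + w'); ring.
Qed.

Lemma ideal3Ml a b c x y : ideal3 a b c x -> ideal3 a b c (y * x).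
Proof. by move=> [u [v [w ->]]]; exists (y * u), (y * v), (y * w); ring. Qed.

Lemma qspan_coord_ideal3 g D (e : 'I_2 -> M) (z : N) a b c : free_on g e ->
  g ^+ D *: q (e ord0) = a *: z -> g ^+ D *: polar q (e ord0) (e ord_max) = b *: z ->
  g ^+ D *: q (e ord_max) = c *: z ->
  forall n, qspan n -> exists E x, ideal3 a b c x /\ g ^+ E *: n = x *: z.
Proof.
move=> [spanE _] Q0 Q1 Q2; apply: qspan_ind.
- by exists 0%N, 0; split; [exact: ideal3_0 | rewrite scale0r scaler0].
- move=> x y [E1 [s1 [I1 H1]]] [E2 [s2 [I2 H2]]].
  exists (E1 + E2)%N, (g ^+ E2 * s1 + g ^+ E1 * s2).
  split; first by apply: ideal3D; apply: ideal3Ml.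
  have -> : g ^+ (E1 + E2) *: (x + y) = g ^+ E2 *: (g ^+ E1 *: x) + g ^+ E1 *: (g ^+ E2 *: y).
    by rewrite scalerDr !scalerA -!exprD (addnC E2).
  by rewrite H1 H2 !scalerA -scalerDl.
- move=> r x [E [s1 [I1 H]]]; exists E, (r * s1); split; first exact: ideal3Ml.
  by rewrite scalerA mulrC -scalerA H scalerA.
move=> m; have [j [r Hr]] := spanE m; rewrite big_ord2 in Hr.
exists (D + j * 2)%N, (r ord0 ^+ 2 * a + r ord0 * r ord_max * b + r ord_max ^+ 2 * c).
split; first by exists (r ord0 ^+ 2), (r ord0 * r ord_max), (r ord_max ^+ 2).
by rewrite exprD exprM -scalerA -(proj1 hq) Hr (scale_quadratic_map_comb _ _ Q0 Q1 Q2).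
Qed.

Lemma kneser_form_primitive : kneser_primitive q -> form_primitive q.
Proof.
move=> spanq g e z a b c k fe fz E0 E1 E2.
have [K0 A0] := eq_locP E0; have [K1 A1] := eq_locP E1; have [K2 A2] := eq_locP E2.
pose K := (K0 + K1 + K2)%N.
have scaleK (v : N) t : g ^+ K *: (g ^+ k *: v) = g ^+ K *: (t *: z ord0) ->
    g ^+ (K + k) *: v = (g ^+ K * t) *: z ord0.
  by rewrite exprD !scalerA.
have Q0 := scaleK _ _ (A0 K (leq_trans (leq_addr K1 K0) (leq_addr K2 _))).
have Q1 := scaleK _ _ (A1 K (leq_trans (leq_addl K0 K1) (leq_addr K2 _))).
have Q2 := scaleK _ _ (A2 K (leq_addl _ K2)).
have [E [x [[u [v [w Ix]] Ez]]]] := qspan_coord_ideal3 fe Q0 Q1 Q2 (spanq (z ord0)).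
have [l Hl] := free_on1_scale_inj fz Ez.
exists (l + E)%N, (g ^+ l * u * g ^+ K), (g ^+ l * v * g ^+ K), (g ^+ l * w * g ^+ K).
by rewrite exprD Hl Ix; ring.
Qed.

Section LocallyInSpan.
Variable n : N.

Definition qspan_loc (r : R) : Prop := exists m, qspan (r ^+ m *: n).

Lemma qspan_locMl x y : qspan_loc x -> qspan_loc (y * x).
Proof. by move=> [m H]; exists m; rewrite exprMn -scalerA; apply: qspanZ. Qed.

Lemma qspan_loc0 : qspan_loc 0.
Proof. by exists 1%N; rewrite expr1 scale0r; apply: qspan0. Qed.

Lemma qspan_locD x y : qspan_loc x -> qspan_loc y -> qspan_loc (x + y).
Proof.
move=> [m1 H1] [m2 H2]; exists (m1 + m2)%N.
rewrite exprDn scaler_suml; apply: (big_ind qspan); [exact: qspan0 | exact: qspanD |].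
move=> i _; rewrite -scalerMnl -scaler_nat -scalerA; apply: qspanZ.
(* each binomial term contains x ^+ m1 or y ^+ m2 *)
case: (leqP m2 i) => [le_m2i | lt_im2].
  have -> : y ^+ i = y ^+ (i - m2) * y ^+ m2 by rewrite -exprD subnK.
  by rewrite -scalerA; do 2!apply: qspanZ.
have le_m1 : (m1 <= m1 + m2 - i)%N by rewrite -addnBA ?leq_addr // ltnW.
have -> : x ^+ (m1 + m2 - i) = x ^+ (m1 + m2 - i - m1) * x ^+ m1.
  by rewrite -exprD subnK.
by rewrite -scalerA; apply: qspanZ; rewrite scalerA mulrC -scalerA; apply: qspanZ.
Qed.

Lemma qspan_loc_cover k (c h : 'I_k -> R) g : \sum_(i < k) c i * h i = 1 ->
  (forall i, qspan_loc (g * h i)) -> qspan_loc g.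
Proof.
move=> cover loc_gh; rewrite -[g]mulr1 -cover mulr_sumr.
apply: (big_ind qspan_loc); [exact: qspan_loc0 | exact: qspan_locD |].
by move=> i _; rewrite mulrCA; apply: qspan_locMl.
Qed.

Lemma qspan_loc1 : qspan_loc 1 -> qspan n.
Proof. by move=> [m]; rewrite expr1n scale1r. Qed.

Lemma form_primitive_qspan_loc f (e : 'I_2 -> M) (z : 'I_1 -> N) :
  form_primitive q -> free_on f e -> free_on f z -> qspan_loc f.
Proof.
move=> primf fe fz.
have [k0 [a0 H0]] := free_on1_coord (q (e ord0)) fz.
have [k1 [b0 H1]] := free_on1_coord (polar q (e ord0) (e ord_max)) fz.
have [k2 [c0 H2]] := free_on1_coord (q (e ord_max)) fz.
pose K := (k0 + k1 + k2)%N.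
have Q0 := scale_expr_ge H0 (leq_trans (leq_addr k1 k0) (leq_addr k2 _) : k0 <= K)%N.
have Q1 := scale_expr_ge H1 (leq_trans (leq_addl k0 k1) (leq_addr k2 _) : k1 <= K)%N.
have Q2 := scale_expr_ge H2 (leq_addl _ k2 : k2 <= K)%N.
set a := _ * a0 in Q0; set b := _ * b0 in Q1; set c := _ * c0 in Q2; clearbody a b c.
have [l [u [v [w Hl]]]] :=
  primf f e z _ _ _ K fe fz (eq_loc_eq f Q0) (eq_loc_eq f Q1) (eq_loc_eq f Q2).
have [kn [r Hn]] := free_on1_coord n fz.
exists (kn + l)%N.
rewrite exprD mulrC -scalerA Hn scalerA mulrC -scalerA Hl !scalerDl -!scalerA -Q0 -Q1 -Q2.
by apply: qspanZ; do 2?apply: qspanD; do 2?apply: qspanZ; apply: qspan_q || apply: qspan_polar.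
Qed.

End LocallyInSpan.

End QuadraticMap.

Theorem proposition6p2 (R : comPzRingType) (M N : lmodType R) (q : M -> N) :
  locally_free M 2 -> locally_free N 1 -> quadratic_map q ->
  (kneser_primitive q <-> form_primitive q).
Proof.
move=> [kM [gM [cM [eM [coverM freeM]]]]] [kN [gN [cN [eN [coverN freeN]]]]] hq.
split=> [|primf n]; first exact: kneser_form_primitive.
apply: qspan_loc1; apply: (qspan_loc_cover coverM) => i.
apply: (qspan_loc_cover coverN) => j; rewrite mul1r.
apply: (form_primitive_qspan_loc n (e := eM i) (z := eN j) primf).
  exact: free_onMr.
by rewrite mulrC; apply: free_onMr.
Qed.
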